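(* Let $m\ge (K+1)^2$. The sampling rule of algorithm $\mathbf{AL_1}$ with batch size $m$ ensures that $N_a(lm)\ge (lm)^{1/2}-1$ for every arm $a\in\{1,\dots,K\}$ and every $l\ge1$ (for which the $l$-th batch has been completed).
   Context: There are $K$ arms (distributions) that can be sampled; $N_a(n)$ is the number of samples from arm $a$ among the first $n$ samples. Algorithm $\mathbf{AL_1}$ with batch size $m$ operates as follows. (1) Initialize by allocating $m$ samples to the arms in round-robin fashion, so that each arm gets at least $\lfloor m/K\rfloor$ samples; set $l=1$ (so $lm$ samples have been generated). (2) Compute a probability vector $t^*(\hat\mu(lm))\in\Sigma_K$ from the current empirical distributions $\hat\mu(lm)$ of the arms and check a stopping criterion; if not stopped: (3) compute the starvation $s_a=\big(((l+1)m)^{1/2}-N_a(lm)\big)^+$ of each arm $a$. (4) If $m\ge\sum_a s_a$, generate $s_a$ samples from each arm $a$ (first $s_1$ from arm 1, then $s_2$ from arm 2, etc.), and in addition draw $\max\{m-\sum_a s_a,0\}$ independent indices from the distribution $t^*(\hat\mu(lm))$ on $\{1,\dots,K\}$ and sample each arm $i$ as many times as $i$ occurs among them. (5) Otherwise, if $\sum_a s_a>m$, generate $\hat s_a$ samples from each arm $a$, where $(\hat s_a)$ solves the load balancing problem $\min\max_a\{s_a-\hat s_a\}$ subject to $s_a\ge\hat s_a\ge0$ for all $a$ and $\sum_a\hat s_a=m$. (6) Increment $l$ by 1 and return to step (2). *)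

From mathcomp Require Import all_boot.

Set Implicit Arguments. Unset Strict Implicit. Unset Printing Implicit Defensive.

(* Arms are 'I_K (arm a <-> index a, 0-based). Counts after l batches: N l a = N_a(lm). *)

Definition round_robin (K m : nat) (a : 'I_K) : nat :=
  count (fun i => i %% K == a) (iota 0 m).

(* Starvation of arm a after batch l: s_a = ((l+1)m)^{1/2} - N_a(lm))^+,
   with the (real) square root rounded down to an integer number of samples. *)
Definition starvation (K m l : nat) (Nl : 'I_K -> nat) (a : 'I_K) : nat :=
  Nat.sqrt ((l.+1) * m) - Nl a.

Definition lb_feasible (K m : nat) (s sh : 'I_K -> nat) : Prop :=
  (forall a, sh a <= s a) /\ \sum_(a < K) sh a = m.

Definition lb_obj (K : nat) (s sh : 'I_K -> nat) : nat :=
  \max_(a < K) (s a - sh a).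

Definition lb_optimal (K m : nat) (s sh : 'I_K -> nat) : Prop :=
  lb_feasible m s sh /\
  forall sh', lb_feasible m s sh' -> lb_obj s sh <= lb_obj s sh'.

(* The samples drawn from t^*(\hat\mu(lm)) are an arbitrary realisation: any
   nonnegative allocation [extra] of the remaining m - \sum_a s_a samples. *)
Definition AL1_step (K m l : nat) (Nl Nl' : 'I_K -> nat) : Prop :=
  let s := starvation m l Nl in
  if \sum_(a < K) s a <= m then
    exists extra : 'I_K -> nat,
      \sum_(a < K) extra a = m - \sum_(a < K) s a /\
      forall a, Nl' a = Nl a + s a + extra a
  else
    exists sh : 'I_K -> nat,
      lb_optimal m s sh /\ forall a, Nl' a = Nl a + sh a.

(* N is a run of AL_1 with batch size m in which batches 1..L have been completed:
   N l a = N_a(lm) for 1 <= l <= L. *)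
Definition AL1_run (K m L : nat) (N : nat -> 'I_K -> nat) : Prop :=
  (forall a, N 1 a = round_robin m a) /\
  forall l, 1 <= l -> l < L -> AL1_step m l (N l) (N l.+1).

(* Each arm keeps the invariant  l m <= (N_a(lm) + 1)^2.  After round robin every arm has at
   least m / K samples, and m / K >= K suffices for the case l = 1.  Given the invariant for l,
   an arm's starvation s_a = sqrt((l+1)m) - N_a(lm) satisfies K s_a <= m, because
   sqrt((l+1)m)^2 - (N_a(lm)+1)^2 <= m and N_a(lm) + 1 >= K + 1.  Hence the starvations fit
   into the batch, the load-balancing branch never fires, and every arm is topped up to at
   least sqrt((l+1)m), which gives the invariant for l + 1. *)

From Stdlib Require Import Reals Lra.
From mathcomp Require Import all_boot zify.

Set Implicit Arguments.
Unset Strict Implicit.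

Lemma Nat_sqrt_spec (x : nat) : Nat.sqrt x ^ 2 <= x < (Nat.sqrt x).+1 ^ 2.
Proof.
have [lo hi] := Nat.sqrt_spec x (Nat.le_0_l _).
by apply/andP; split; rewrite -mulnn; apply/leP.
Qed.

Lemma count_mod_iota_mul (K q : nat) (a : 'I_K) :
  q <= count (fun i => i %% K == a) (iota 0 (q * K)).
Proof.
elim: q => [//|q IH].
rewrite mulSn addnC iotaD count_cat add0n.
have : 0 < count (fun i => i %% K == a) (iota (q * K) K).
  rewrite -has_count; apply/hasP; exists (q * K + a).
    by rewrite mem_iota; have := ltn_ord a; lia.
  by rewrite /= modnMDl modn_small.
lia.
Qed.

Lemma round_robin_ge_div (K m : nat) (a : 'I_K) : m %/ K <= round_robin m a.
Proof.
rewrite /round_robin; set d := m %/ K.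
rewrite -(subnKC (leq_divM m K)) -/d iotaD count_cat.
exact: leq_trans (count_mod_iota_mul d a) (leq_addr _ _).
Qed.

Lemma ltn_sqr_divn_succ (K m : nat) : 0 < K -> K ^ 2 <= m -> m < (m %/ K).+1 ^ 2.
Proof.
move=> K_gt0 le_K2m; have le_K_div : K <= m %/ K by rewrite leq_divRL // -expnSr.
have lt_mod := ltn_pmod m K_gt0.
rewrite {1}(divn_eq m K) -mulnn; nia.
Qed.

(* [q - n] is truncated, so only the case [q = n + 1 + t] carries content; then
   [t (2 (n + 1) + t) = q^2 - (n + 1)^2 <= m]. *)
Lemma mul_sub_sqr_le (K m n q : nat) :
  K <= m -> K <= n.+1 -> q ^ 2 <= n.+1 ^ 2 + m -> K * (q - n) <= m.
Proof.
rewrite -!mulnn => le_Km le_Kn le_q2.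
case: (leqP q n) => [le_qn | lt_nq]; first by rewrite (eqP le_qn) muln0.
have [t def_q] : exists t, q = n.+1 + t by exists (q - n.+1); lia.
have {le_q2} : t * (2 * n.+1 + t) <= m by rewrite def_q in le_q2; nia.
rewrite def_q; case: t {def_q lt_nq} => [|t]; nia.
Qed.

Section Starvation.

Variables (K m l : nat) (Nl : 'I_K -> nat).
Hypothesis sqr_K_le : K.+1 ^ 2 <= m.
Hypothesis l_gt0 : 0 < l.
Hypothesis Nl_sqr : forall a, l * m <= (Nl a).+1 ^ 2.

Lemma starvation_le_div (a : 'I_K) : starvation m l Nl a <= m %/ K.
Proof.
have K_gt0 : 0 < K by case: a => i; lia.
rewrite leq_divRL // mulnC; apply: mul_sub_sqr_le.
- by move: sqr_K_le; rewrite expnS expn1; nia.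
- have : K.+1 ^ 2 <= (Nl a).+1 ^ 2.
    exact: leq_trans sqr_K_le (leq_trans (leq_pmull _ l_gt0) (Nl_sqr a)).
  by rewrite leq_exp2r // => /ltnW.
- have /andP[le_sqrt _] := Nat_sqrt_spec (l.+1 * m).
  by apply: leq_trans le_sqrt _; rewrite mulSn addnC leq_add2r.
Qed.

Lemma sum_starvation_le : \sum_(a < K) starvation m l Nl a <= m.
Proof.
apply: (@leq_trans (\sum_(a < K) m %/ K)).
  by apply: leq_sum => a _; apply: starvation_le_div.
by rewrite sum_nat_const card_ord mulnC leq_divM.
Qed.

Lemma AL1_step_sqr (Nl' : 'I_K -> nat) :
  AL1_step m l Nl Nl' -> forall a, l.+1 * m <= (Nl' a).+1 ^ 2.
Proof.
rewrite /AL1_step sum_starvation_le => -[extra [_ def_Nl']] a; rewrite def_Nl'.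
have /andP[_ lt_sqrt] := Nat_sqrt_spec (l.+1 * m).
apply: ltnW (leq_trans lt_sqrt _); rewrite leq_exp2r // ltnS /starvation.
lia.
Qed.

End Starvation.

Lemma AL1_run_sqr (K m L : nat) (N : nat -> 'I_K -> nat) :
  K.+1 ^ 2 <= m -> AL1_run m L N ->
  forall l a, 0 < l -> l <= L -> l * m <= (N l a).+1 ^ 2.
Proof.
move=> sqr_K_le [N1 N_step]; elim=> [//|l IH] a _ lt_lL.
case: l IH lt_lL => [|l] IH lt_lL.
  have K_gt0 : 0 < K by case: a => i; lia.
  have le_K2m : K ^ 2 <= m by apply: leq_trans sqr_K_le; rewrite leq_exp2r.
  rewrite N1 mul1n ltnW // (leq_trans (ltn_sqr_divn_succ K_gt0 le_K2m)) //.
  by rewrite leq_exp2r // ltnS round_robin_ge_div.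
apply: (AL1_step_sqr sqr_K_le (ltn0Sn l) _ (N_step l.+1 isT lt_lL)) => b.
exact: IH (ltnW lt_lL).
Qed.

Lemma sqrt_INR_sub1_le (x n : nat) :
  x <= n.+1 ^ 2 -> Rle (Rminus (sqrt (INR x)) R1) (INR n).
Proof.
move=> /leP /le_INR; rewrite -mulnn -multE mult_INR S_INR => le_x.
have := sqrt_le_1_alt _ _ le_x; rewrite sqrt_square; first lra.
by have := pos_INR n; lra.
Qed.

Theorem lemma8 (K m L : nat) (N : nat -> 'I_K -> nat) :
  (K.+1) ^ 2 <= m ->
  AL1_run m L N ->
  forall (l : nat) (a : 'I_K), 1 <= l -> l <= L ->
    Rle (Rminus (sqrt (INR (l * m))) R1) (INR (N l a)).
Proof.
move=> sqr_K_le run l a l_gt0 le_lL.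
exact/sqrt_INR_sub1_le/(AL1_run_sqr sqr_K_le run).
Qed.
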